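(* Let $\Gamma$ be a finite, simple and undirected graph. Then there exists a finite nilpotent group $G$ such that $\Delta_D(G)$ contains $\Gamma$ as an induced subgraph.
   Context: For a finite group $G$, let $M(G)$ denote its Schur multiplier. A Schur cover of $G$ is a group $\tilde{G}$ with a central extension $\{e\}\to M(G)\xrightarrow{\iota}\tilde{G}\xrightarrow{\pi}G\to\{e\}$ such that $\iota(M(G))\subseteq Z(\tilde{G})\cap[\tilde{G},\tilde{G}]$ and $\tilde G$ has maximal order among such extensions. The deep commuting graph $\Delta_D(G)$ is the simple graph with vertex set $G$ in which two distinct vertices are adjacent if and only if their preimages under $\pi$ commute in $\tilde{G}$ (independent of the choice of Schur cover and preimages). *)

From mathcomp Require Import all_boot all_fingroup all_solvable.
Set Implicit Arguments. Unset Strict Implicit. Unset Printing Implicit Defensive.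
Import GroupScope.

Definition stem_extension (hT gT : finGroupType) (H : {group hT})
    (G : {group gT}) (f : {morphism H >-> gT}) : Prop :=
  f @* H = G /\ 'ker f \subset 'Z(H) :&: H^`(1).

(* A Schur cover of G: a stem extension of maximal order among all stem
   extensions of G (by any finite group). Its kernel is then M(G). *)
Definition schur_cover (hT gT : finGroupType) (H : {group hT})
    (G : {group gT}) (f : {morphism H >-> gT}) : Prop :=
  stem_extension G f /\
  forall (kT : finGroupType) (K : {group kT}) (g : {morphism K >-> gT}),
    stem_extension G g -> #|K| <= #|H|.

Definition deep_adj (gT : finGroupType) (G : {group gT}) (x y : gT) : Prop :=
  [/\ x \in G, y \in G, x != y &
   forall (hT : finGroupType) (H : {group hT}) (f : {morphism H >-> gT}),
     schur_cover G f ->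
     forall a b, a \in H -> b \in H -> f a = x -> f b = y -> commute a b].

(* Number theory turns the graph into vectors.  Let n be the product of distinct
   primes q_k, one for each ordered pair k of vertices.  Modulo q_(u,v), for a
   non-edge uv with u <> v, the vertex u gets a vector (unit, 0), v gets
   (0, unit) and every other vertex gets 0; modulo q_(w,w) only the first
   coordinate of w is a unit; modulo the primes of edges everything is 0.  By
   the Chinese remainder theorem the resulting (a_w, b_w) in (Z/n)^2 satisfy
   a_u b_v = a_v b_u exactly when uv is an edge, and w |-> a_w is injective.

   Group theory turns the vectors into a deep commuting graph.  Let H be the
   Heisenberg group of unitriangular 3x3 matrices over Z/n and G = H/Z(H), which
   is (Z/n)^2.  In a central extension K of G pick lifts x, y of the two
   generators.  Then c = [y, x] is central with c^n = 1, every element of K is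
   x^i y^j z with z central, and (x^i y^j z)(x^k y^l z') and
   (x^k y^l z')(x^i y^j z) differ by the factor c^(jk - li).  So lifts of
   (a, b) and (a', b') commute iff ab' = a'b, and K' lies in <c>; for a stem
   extension this bounds the kernel by n = |Z(H)|, so H -> G is a Schur cover. *)

From HB Require Import structures.
From mathcomp Require Import all_boot all_algebra all_fingroup all_solvable.
From mathcomp Require Import ring.
Set Implicit Arguments. Unset Strict Implicit. Unset Printing Implicit Defensive.
Import GRing.Theory.

Fixpoint prime_chain (n : nat) : nat :=
  if n is n'.+1 then sval (prime_above (prime_chain n')) else 2.

Lemma prime_chain_prime n : prime (prime_chain n).
Proof. by case: n => [|n] //=; case: prime_above. Qed.

Lemma prime_chain_inj : injective prime_chain.
Proof.
apply/incn_inj/leq_mono/(homo_ltn ltn_trans) => n /=.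
by case: prime_above.
Qed.

Section PrimeFamily.
Variables (I : finType) (q : I -> nat).
Hypotheses (q_prime : forall i, prime (q i)) (q_inj : injective q).

Lemma prime_family_dvd_prod (s : seq I) (P : pred I) k :
  (q k %| \prod_(i <- s | P i) q i) = (k \in s) && P k.
Proof.
rewrite Euclid_dvd_prod // big_has_cond.
apply/hasP/andP => [[i s_i /andP[Pi]]|[s_k Pk]].
  by rewrite dvdn_prime2 // => /eqP/q_inj ->.
by exists k; rewrite //= Pk dvdnn.
Qed.

Lemma eqn_mod_prime_family_prod (s : seq I) x y : uniq s ->
  (x == y %[mod \prod_(i <- s) q i]) = all (fun i => x == y %[mod q i]) s.
Proof.
elim: s => [|i s IHs] /=; first by rewrite big_nil !modn1 eqxx.
case/andP=> s'i uniq_s; rewrite big_cons chinese_remainder ?IHs //.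
by rewrite prime_coprime // prime_family_dvd_prod (negbTE s'i).
Qed.

End PrimeFamily.

Lemma eqn_mod_dvdE d s t :
  (d %| s) || (d %| t) -> (s == t %[mod d]) = (d %| s) && (d %| t).
Proof. by rewrite /dvdn => /orP[] /eqP->; rewrite eqxx ?andbT // eq_sym. Qed.

Section GraphCode.
Variables (V : finType) (e : rel V).
Hypotheses (e_sym : symmetric e) (e_irr : irreflexive e).

(* [None] indexes a spare prime, making the modulus exceed 1 even for an empty graph. *)
Local Notation I := (option (V * V)).

Definition pair_prime (k : I) := prime_chain (enum_rank k).

Lemma pair_prime_prime k : prime (pair_prime k).
Proof. exact: prime_chain_prime. Qed.

Lemma pair_prime_inj : injective pair_prime.
Proof. by move=> k l /prime_chain_inj/ord_inj/enum_rank_inj. Qed.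

Definition from_nonedge (w : V) (k : I) : bool :=
  if k is Some (u, v) then (w == u) && ~~ e u v else false.

Definition to_nonedge (w : V) (k : I) : bool :=
  if k is Some (u, v) then [&& w == v, u != v & ~~ e u v] else false.

Definition code_a (w : V) := \prod_(k | ~~ from_nonedge w k) pair_prime k.
Definition code_b (w : V) := \prod_(k | ~~ to_nonedge w k) pair_prime k.
Definition code_modulus := \prod_(k : I) pair_prime k.

Lemma pair_prime_dvd_prod (P : pred I) k :
  (pair_prime k %| \prod_(l | P l) pair_prime l) = P k.
Proof.
by rewrite (prime_family_dvd_prod pair_prime_prime pair_prime_inj) mem_index_enum.
Qed.

Lemma eqn_mod_code_modulus x y :
  (x == y %[mod code_modulus]) = [forall k, x == y %[mod pair_prime k]].
Proof.
rewrite (eqn_mod_prime_family_prod pair_prime_prime pair_prime_inj) ?index_enum_uniq //.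
by apply/allP/forallP => eq_mod k //; rewrite eq_mod ?mem_index_enum.
Qed.

Lemma code_modulus_gt1 : 1 < code_modulus.
Proof.
apply: leq_trans (prime_gt1 (pair_prime_prime None)) (dvdn_leq _ _).
  by apply: prodn_gt0 => k; apply/prime_gt0/pair_prime_prime.
by rewrite (pair_prime_dvd_prod predT).
Qed.

Lemma from_to_nonedge x y k :
  from_nonedge x k && to_nonedge y k = [&& k == Some (x, y), x != y & ~~ e x y].
Proof.
case: k => [[u v]|] //=; rewrite -[Some _ == _]/((u, v) == (x, y)) xpair_eqE.
have [->|] //= := eqVneq x u; have [->|] /= := eqVneq y v; rewrite ?andbF //.
by rewrite andbCA andbb.
Qed.

Lemma code_cross_dvd x y k :
  (pair_prime k %| code_a x * code_b y) = ~~ [&& k == Some (x, y), x != y & ~~ e x y].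
Proof.
by rewrite Euclid_dvdM ?pair_prime_prime // !pair_prime_dvd_prod -negb_and from_to_nonedge.
Qed.

Lemma code_cross_eqmod x y : x != y ->
  (code_a x * code_b y == code_a y * code_b x %[mod code_modulus]) = e x y.
Proof.
move=> neq_xy.
have eqmodE k : (code_a x * code_b y == code_a y * code_b x %[mod pair_prime k]) =
      ~~ [&& k == Some (x, y), x != y & ~~ e x y]
   && ~~ [&& k == Some (y, x), y != x & ~~ e y x].
  rewrite eqn_mod_dvdE !code_cross_dvd // -negb_and; case: (k =P Some (x, y)) => //= ->.
  by rewrite -[Some _ == _]/((x, y) == (y, x)) xpair_eqE (negbTE neq_xy) !andbF.
rewrite eqn_mod_code_modulus.
apply/forallP/idP => [/(_ (Some (x, y)))|exy k].
  by rewrite eqmodE eqxx neq_xy negbK => /andP[].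
by rewrite eqmodE [e y x]e_sym exy !andbF.
Qed.

Lemma code_a_inj_mod x y : code_a x = code_a y %[mod code_modulus] -> x = y.
Proof.
move/eqP; rewrite eqn_mod_code_modulus => /forallP/(_ (Some (x, x))) /eqP eq_mod.
have : (pair_prime (Some (x, x)) %| code_a x) = (pair_prime (Some (x, x)) %| code_a y).
  by rewrite /dvdn eq_mod.
by rewrite !pair_prime_dvd_prod /= eqxx e_irr /= andbT => /esym/negbFE/eqP.
Qed.

End GraphCode.

Lemma graph_code_exists (V : finType) (e : rel V) :
    symmetric e -> irreflexive e ->
  exists n (a b : V -> nat), [/\ 1 < n,
    forall u v, u != v -> (a u * b v == a v * b u %[mod n]) = e u v &
    forall u v, a u = a v %[mod n] -> u = v].
Proof.
move=> e_sym e_irr; exists (code_modulus V), (code_a e), (code_b e).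
by split; [exact: code_modulus_gt1 | exact: code_cross_eqmod | exact: code_a_inj_mod].
Qed.

Local Open Scope group_scope.

Lemma card_ker_morphim (aT rT : finGroupType) (D : {group aT})
    (f : {morphism D >-> rT}) :
  #|D| = (#|'ker f| * #|f @* D|)%N.
Proof. by rewrite card_morphim setIid Lagrange // subsetIl. Qed.

Section Heisenberg.
Variable m : nat.
Local Notation n := m.+2.
Local Notation R := 'Z_n.

Definition heis := (R * R * R)%type.
HB.instance Definition _ := Finite.on heis.

Local Open Scope ring_scope.

(* [(a, b, c)] stands for the unitriangular matrix [[1, a, c], [0, 1, b], [0, 0, 1]]. *)
Definition heis_mul (x y : heis) : heis :=
  (x.1.1 + y.1.1, x.1.2 + y.1.2, x.2 + y.2 + x.1.1 * y.1.2).
Definition heis_one : heis := (0, 0, 0).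
Definition heis_inv (x : heis) : heis := (- x.1.1, - x.1.2, - x.2 + x.1.1 * x.1.2).

Lemma heis_mulA : associative heis_mul.
Proof.
by move=> [[a b] c] [[a' b'] c'] [[a'' b''] c'']; congr (_, _, _); rewrite /=; ring.
Qed.

Lemma heis_mul1 : left_id heis_one heis_mul.
Proof. by move=> [[a b] c]; congr (_, _, _); rewrite /=; ring. Qed.

Lemma heis_mulV : left_inverse heis_one heis_inv heis_mul.
Proof. by move=> [[a b] c]; congr (_, _, _); rewrite /=; ring. Qed.

HB.instance Definition _ := Finite_isGroup.Build heis heis_mulA heis_mul1 heis_mulV.

Definition triple (a b c : R) : heis := (a, b, c).

Lemma tripleM a b c a' b' c' :
  (triple a b c * triple a' b' c')%g = triple (a + a') (b + b') (c + c' + a * b').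
Proof. by []. Qed.

Lemma tripleV a b c : (triple a b c)^-1%g = triple (- a) (- b) (- c + a * b).
Proof. by []. Qed.

Lemma triple_eta (h : heis) : h = triple h.1.1 h.1.2 h.2.
Proof. by case: h => [[]]. Qed.

Lemma commute_triple a b c a' b' c' :
  commute (triple a b c) (triple a' b' c') <-> a * b' = a' * b.
Proof.
rewrite /commute !tripleM; split => [/(congr1 snd)/=|eq_ab].
  by rewrite (addrC c' c); apply: addrI.
by congr triple; rewrite ?(addrC c') ?eq_ab; ring.
Qed.

Lemma commg_triple a b c a' b' c' :
  [~ triple a b c, triple a' b' c']%g = triple 0 0 (a * b' - a' * b).
Proof. by rewrite /commg /conjg !tripleV !tripleM; congr triple; rewrite /=; ring. Qed.

Definition heis_x := triple 1 0 0.
Definition heis_y := triple 0 1 0.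

Lemma expg_heis_x k : (heis_x ^+ k)%g = triple k%:R 0 0.
Proof. by elim: k => // k IHk; rewrite expgS IHk tripleM mulrS ?mulr0 ?addr0. Qed.

Lemma expg_heis_y k : (heis_y ^+ k)%g = triple 0 k%:R 0.
Proof. by elim: k => // k IHk; rewrite expgS IHk tripleM mulrS ?mul0r ?addr0. Qed.

Definition heis_center : {set heis} := [set h : heis | (h.1.1 == 0) && (h.1.2 == 0)].

Lemma mem_heis_center a b c : (triple a b c \in heis_center) = (a == 0) && (b == 0).
Proof. by rewrite inE. Qed.

Lemma group_set_heis_center : group_set heis_center.
Proof.
apply/group_setP; split => [|[[a b] c] [[a' b'] c']]; first by rewrite inE /= eqxx.
rewrite -!/(triple _ _ _) tripleM !mem_heis_center.
by case/andP=> /eqP-> /eqP-> /andP[/eqP-> /eqP->]; rewrite !addr0 eqxx.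
Qed.
Canonical heis_center_group := Group group_set_heis_center.

Lemma heis_center_sub_center : (heis_center \subset 'Z([set: heis]))%g.
Proof.
apply/subsetP => -[[a b] c]; rewrite -/(triple _ _ _) mem_heis_center.
case/andP=> /eqP-> /eqP->; apply/centerP; split => [|h _]; first by rewrite inE.
by rewrite (triple_eta h); apply/commute_triple; rewrite mul0r mulr0.
Qed.

Lemma heis_center_sub_der : (heis_center \subset [set: heis]^`(1))%g.
Proof.
apply/subsetP => -[[a b] c]; rewrite -/(triple _ _ _) mem_heis_center.
case/andP=> /eqP-> /eqP->.
have -> : triple 0 0 c = [~ heis_x, triple 0 c 0]%g.
  by rewrite commg_triple mul1r mul0r subr0.
by rewrite derg1 mem_commg ?inE.
Qed.

Lemma heis_center_normal : ([set: heis] \subset 'N(heis_center))%g.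
Proof. exact: normal_norm (sub_center_normal heis_center_sub_center). Qed.

Definition heis_proj := restrm heis_center_normal (coset heis_center).
Definition heis_quo := (heis_proj @* [set: heis])%G.

Lemma ker_heis_proj : ('ker heis_proj)%g = heis_center.
Proof. by rewrite ker_restrm ker_coset setTI. Qed.

Lemma heis_proj_stem : stem_extension heis_quo heis_proj.
Proof.
by split; rewrite // ker_heis_proj subsetI heis_center_sub_center heis_center_sub_der.
Qed.

Lemma heis_proj_triple_eq a b c a' b' c' :
  (heis_proj (triple a b c) == heis_proj (triple a' b' c')) = (a == a') && (b == b').
Proof.
apply/eqP/andP => [|[/eqP-> /eqP->]].
  move/rcoset_kerP; rewrite !inE mem_rcoset ker_heis_proj tripleV tripleM mem_heis_center.
  by rewrite !subr_eq0 => /(_ isT isT) /andP[/eqP-> /eqP->].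
apply/rcoset_kerP; rewrite ?inE // mem_rcoset ker_heis_proj tripleV tripleM.
by rewrite mem_heis_center !subrr eqxx.
Qed.

Lemma heis_quo_abelian : abelian heis_quo.
Proof.
apply/centsP => _ /morphimP[h _ _ ->] _ /morphimP[k _ _ ->].
rewrite /commute -!morphM ?inE //; apply/eqP.
rewrite (triple_eta h) (triple_eta k) !tripleM heis_proj_triple_eq.
by rewrite !(addrC h.1.1) !(addrC h.1.2) !eqxx.
Qed.

Section CentralExtension.
Local Open Scope group_scope.
Variables (kT : finGroupType) (K : {group kT}).
Variable g : {morphism K >-> coset_of heis_center}.
Hypotheses (gK : g @* K = heis_quo) (kerZ : 'ker g \subset 'Z(K)).

Lemma ker_commute z w : z \in 'ker g -> w \in K -> commute z w.
Proof. by move=> /(subsetP kerZ)/centerP[_ cKz] /cKz. Qed.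

Lemma heis_ext_lift h : exists2 x, x \in K & g x = heis_proj h.
Proof.
have : heis_proj h \in g @* K by rewrite gK mem_morphim ?inE.
by case/morphimP=> x Kx _ ->; exists x.
Qed.

Lemma heis_ext_triple w : w \in K -> exists (i j : R) t, g w = heis_proj (triple i j t).
Proof.
move=> Kw; have : g w \in heis_quo by rewrite -gK mem_morphim.
by case/morphimP=> h _ _ ->; exists h.1.1, h.1.2, h.2; rewrite -triple_eta.
Qed.

Section Generators.
Variables x y : kT.
Hypotheses (Kx : x \in K) (Ky : y \in K).
Hypotheses (gx : g x = heis_proj heis_x) (gy : g y = heis_proj heis_y).
Let c := [~ y, x].

Lemma comm_gens_ker : c \in 'ker g.
Proof.
apply/kerP; first by rewrite groupR.
rewrite morphR // gx gy -morphR ?inE // commg_triple; apply/eqP.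
by rewrite -(morph1 heis_proj) (heis_proj_triple_eq _ _ _ 0 0 0) !eqxx.
Qed.

Lemma commute_x_comm : commute x c.
Proof. exact/commute_sym/ker_commute/Kx/comm_gens_ker. Qed.

Lemma commute_y_comm : commute y c.
Proof. exact/commute_sym/ker_commute/Ky/comm_gens_ker. Qed.

Lemma comm_gens_expn : c ^+ n = 1.
Proof.
rewrite /c -commgX; last exact: commute_x_comm.
apply/eqP/commgP/commute_sym/ker_commute => //; apply/kerP; first by rewrite groupX.
rewrite morphX // gx -morphX ?inE // expg_heis_x pchar_Zp //; apply/eqP.
by rewrite -(morph1 heis_proj) (heis_proj_triple_eq _ _ _ 0 0 0) !eqxx.
Qed.

Lemma mul_gens_expn i j k l :
  (x ^+ i * y ^+ j) * (x ^+ k * y ^+ l) = x ^+ (i + k) * y ^+ (j + l) * c ^+ (j * k).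
Proof.
have yx : y ^+ j * x ^+ k = x ^+ k * y ^+ j * c ^+ (j * k).
  by rewrite commgC commXXg //; [exact: commute_y_comm | exact: commute_x_comm].
have cy : commute (c ^+ (j * k)) (y ^+ l).
  exact/commuteX/commute_sym/commuteX/commute_y_comm.
rewrite !mulgA -(mulgA _ (y ^+ j)) yx !mulgA -expgD -!mulgA cy.
by rewrite !mulgA -(mulgA _ (y ^+ j)) -expgD.
Qed.

Lemma heis_ext_decomp a (i j : R) t : a \in K -> g a = heis_proj (triple i j t) ->
  exists2 z, z \in 'ker g & a = x ^+ i * y ^+ j * z.
Proof.
move=> Ka ga; exists ((x ^+ i * y ^+ j)^-1 * a); last by rewrite mulKVg.
have Kxy : x ^+ i * y ^+ j \in K by rewrite groupM ?groupX.
have gxy : g (x ^+ i * y ^+ j) = heis_proj (triple i j (i * j)%R).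
  rewrite morphM ?groupX // !morphX // gx gy -!morphX ?inE // -morphM ?inE //.
  by rewrite expg_heis_x expg_heis_y !natr_Zp tripleM addr0 !add0r.
apply/kerP; first by rewrite groupM ?groupV.
rewrite morphM ?groupV // morphV // gxy ga; apply/eqP.
by rewrite -eq_mulVg1 heis_proj_triple_eq !eqxx.
Qed.

Lemma mul_ker_swap i j k l z z' : z \in 'ker g -> z' \in 'ker g ->
  exists u, (x ^+ i * y ^+ j * z) * (x ^+ k * y ^+ l * z') = u * c ^+ (j * k) /\
            (x ^+ k * y ^+ l * z') * (x ^+ i * y ^+ j * z) = u * c ^+ (l * i).
Proof.
move=> kz kz'; have Kz := dom_ker kz; have Kz' := dom_ker kz'.
have shift a b w w' : w \in 'ker g -> b \in K -> a * w * (b * w') = a * b * (w * w').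
  by move=> kw Kb; rewrite !mulgA -(mulgA a w b) (ker_commute kw Kb) !mulgA.
have cz r : commute (c ^+ r) (z * z').
  apply/commute_sym/commuteX/commute_sym/ker_commute; first exact: comm_gens_ker.
  by rewrite groupM.
exists (x ^+ (i + k) * y ^+ (j + l) * (z * z')); split.
  by rewrite shift ?groupM ?groupX // mul_gens_expn -!mulgA [z * (z' * _)]mulgA cz.
rewrite shift ?groupM ?groupX // mul_gens_expn -!mulgA (addnC k) (addnC l).
by rewrite (ker_commute kz' Kz) [z * (z' * _)]mulgA cz.
Qed.

Lemma heis_ext_commute_gens a b (i j k l t t' : R) : a \in K -> b \in K ->
    g a = heis_proj (triple i j t) -> g b = heis_proj (triple k l t') ->
  (i * l = k * j)%R -> commute a b.
Proof.
move=> Ka Kb ga gb /(congr1 val) /= eq_mod.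
have [z kz ->] := heis_ext_decomp Ka ga; have [z' kz' ->] := heis_ext_decomp Kb gb.
rewrite /commute; have [u [-> ->]] := mul_ker_swap i j k l kz kz'.
by rewrite -(expg_mod _ comm_gens_expn) mulnC -eq_mod mulnC (expg_mod _ comm_gens_expn).
Qed.

Lemma heis_ext_commg_cycle a b : a \in K -> b \in K -> [~ a, b] \in <[c]>.
Proof.
move=> Ka Kb.
have [i [j [t ga]]] := heis_ext_triple Ka; have [k [l [t' gb]]] := heis_ext_triple Kb.
have [z kz ->] := heis_ext_decomp Ka ga; have [z' kz' ->] := heis_ext_decomp Kb gb.
have [u [ab ba]] := mul_ker_swap i j k l kz kz'.
have -> : forall v w : kT, [~ v, w] = (w * v)^-1 * (v * w).
  by move=> v w; rewrite invMg /commg /conjg !mulgA.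
by rewrite ab ba invMg -mulgA (mulgA u^-1) mulVg mul1g groupM ?groupV ?mem_cycle.
Qed.

End Generators.

Lemma heis_ext_commute a b (i j k l t t' : R) : a \in K -> b \in K ->
    g a = heis_proj (triple i j t) -> g b = heis_proj (triple k l t') ->
  (i * l = k * j)%R -> commute a b.
Proof.
move=> Ka Kb ga gb eq_il.
have [x Kx gx] := heis_ext_lift heis_x; have [y Ky gy] := heis_ext_lift heis_y.
exact: (heis_ext_commute_gens Kx Ky gx gy Ka Kb ga gb eq_il).
Qed.

Lemma heis_ext_der_card : (#|K^`(1)| <= n)%N.
Proof.
have [x Kx gx] := heis_ext_lift heis_x; have [y Ky gy] := heis_ext_lift heis_y.
have der_sub : K^`(1) \subset <[[~ y, x]]>.
  rewrite derg1 gen_subG; apply/subsetP => _ /imset2P[a b Ka Kb ->].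
  exact: heis_ext_commg_cycle.
apply: leq_trans (subset_leq_card der_sub) (dvdn_leq _ _) => //.
by rewrite order_dvdn (comm_gens_expn Kx Ky gx gy).
Qed.

End CentralExtension.

Lemma card_heis_center : #|heis_center| = n.
Proof.
have -> : heis_center = [set triple 0 0 c | c : R].
  apply/setP => -[[a b] c]; rewrite -/(triple _ _ _) mem_heis_center.
  apply/andP/imsetP => [[/eqP-> /eqP->]|[c' _ [-> -> _]]]; last by [].
  by exists c.
by rewrite card_imset ?card_ord // => c c' [].
Qed.

Lemma heis_proj_schur : schur_cover heis_quo heis_proj.
Proof.
split => [|kT K g [gK]]; first exact: heis_proj_stem.
rewrite subsetI => /andP[kerZ kerD].
rewrite (card_ker_morphim g) (card_ker_morphim heis_proj) gK ker_heis_proj leq_mul2r.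
apply/orP; right; rewrite card_heis_center.
exact: leq_trans (subset_leq_card kerD) (heis_ext_der_card gK kerZ).
Qed.

Lemma heis_quo_deep_adj a b a' b' :
  deep_adj heis_quo (heis_proj (triple a b 0)) (heis_proj (triple a' b' 0)) <->
  (a, b) != (a', b') /\ a * b' = a' * b.
Proof.
have neqE : (heis_proj (triple a b 0) != heis_proj (triple a' b' 0)) = ((a, b) != (a', b')).
  by rewrite heis_proj_triple_eq xpair_eqE.
split => [[_ _ neq cover_comm]|[neq eq_ab]].
  rewrite -neqE; split => //.
  move/(_ _ _ _ heis_proj_schur (triple a b 0) (triple a' b' 0)): cover_comm.
  by rewrite !inE => /(_ isT isT erefl erefl)/commute_triple.
split; rewrite ?mem_morphim ?inE ?neqE //.
move=> hT H f [[fH]]; rewrite subsetI => /andP[kerZ _] _ p p' Hp Hp' fp fp'.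
exact: (heis_ext_commute fH kerZ Hp Hp' fp fp' eq_ab).
Qed.

End Heisenberg.

Lemma eq_natr_Zp m p q : ((p%:R : 'Z_m.+2) == q%:R)%R = (p == q %[mod m.+2]).
Proof. by rewrite !Zp_nat -val_eqE. Qed.

Theorem theorem3p5 (V : finType) (e : rel V)
    (e_sym : symmetric e) (e_irr : irreflexive e) :
  exists (gT : finGroupType) (G : {group gT}), nilpotent G /\
    exists phi : V -> gT,
      [/\ injective phi, (forall v, phi v \in G) &
          forall u v, e u v <-> deep_adj G (phi u) (phi v)].
Proof.
have [[|[|m]] [a [b [//= _ code_adj code_inj]]]] := graph_code_exists e_sym e_irr.
pose phi v := @heis_proj m (triple (a v)%:R%R (b v)%:R%R 0%R).
have phi_inj : injective phi.
  by move=> u v /eqP; rewrite heis_proj_triple_eq !eq_natr_Zp => /andP[/eqP/code_inj].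
exists _, (heis_quo m); split; first exact/abelian_nil/heis_quo_abelian.
exists phi; split => // [v|u v]; first by rewrite mem_morphim ?inE.
rewrite heis_quo_deep_adj -!natrM.
have [<-|neq_uv] := eqVneq u v; first by rewrite e_irr eqxx; split => // -[].
rewrite xpair_eqE !eq_natr_Zp -code_adj //.
have -> : (a u == a v %[mod m.+2]) = false.
  by apply: contraNF neq_uv => /eqP/code_inj->.
split => [eq_mod|[_ /eqP]]; last by rewrite eq_natr_Zp.
by split => //; apply/eqP; rewrite eq_natr_Zp.
Qed.
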